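(* Let $a_*\in\mathbb{R}\setminus\{0\}$ and $f_*\in C^2([-1,1]\times(\mathbb{R}\setminus\{-a_*\}))$ be such that \[ \partial_yf_*(1,a)=\frac{1-i(a_*+a)}{2i(a_*+a)}f_*(1,a)\quad\text{for all }a\in\mathbb{R}\setminus\{-a_*\}. \] Then $\mathcal R(a_*+a,f_*(\cdot,a))\in Y$ for all $a\in\mathbb{R}\setminus\{-a_*\}$, and the map $a\mapsto \mathcal R(a_*+a,f_*(\cdot,a))$ from $\mathbb{R}\setminus\{-a_*\}$ to $Y$ is continuous.
   Context: $Y$ is the vector space of all $f\in C(-1,1)$ (complex valued) such that $y\mapsto(1+y)(1-y)^2f(y)$ extends to a continuous function on $[-1,1]$, with norm $\|f\|_Y:=\sup_{y\in(-1,1)}(1+y)(1-y)^2|f(y)|$. For $\alpha\in\mathbb{R}\setminus\{0\}$, $f\in C^2(-1,1)$ and $y\in(-1,1)$, \[ \mathcal R(\alpha,f)(y):=f''(y)+p_0(y,\alpha)f'(y)+q_0(y,\alpha)f(y)+\frac{f(y)|f(y)|^2}{(1-y)^2}, \] where \[ p_0(y,\alpha):=\frac{4i\alpha}{(1-y)^3}-\frac{2i\alpha}{(1-y)^2}-\frac{2+\frac{2i}{\alpha}}{1-y}+\frac{2}{1+y},\qquad q_0(y,\alpha):=-\frac{2-2i\alpha}{(1-y)^3}-\frac{\frac{1}{\alpha^2}-\frac{i}{\alpha}}{(1-y)^2}-\frac{1+\frac{i}{\alpha}}{1-y}-\frac{1+\frac{i}{\alpha}}{1+y}. \] Here $f_*(\cdot,a)$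 denotes $y\mapsto f_*(y,a)$. *)

From Stdlib Require Import Reals.
From Coquelicot Require Import Coquelicot.
Open Scope R_scope.

Definition Cderive (g : R -> C) (y : R) : C :=
  (Derive (fun t => Re (g t)) y, Derive (fun t => Im (g t)) y).

Definition p0 (y alpha : R) : C :=
  (RtoC 4 * Ci * RtoC alpha / RtoC ((1 - y) ^ 3)
   - RtoC 2 * Ci * RtoC alpha / RtoC ((1 - y) ^ 2)
   - (RtoC 2 + RtoC 2 * Ci / RtoC alpha) / RtoC (1 - y)
   + RtoC 2 / RtoC (1 + y))%C.

Definition q0 (y alpha : R) : C :=
  (- (RtoC 2 - RtoC 2 * Ci * RtoC alpha) / RtoC ((1 - y) ^ 3)
   - (RtoC 1 / RtoC (alpha ^ 2) - Ci / RtoC alpha) / RtoC ((1 - y) ^ 2)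
   - (RtoC 1 + Ci / RtoC alpha) / RtoC (1 - y)
   - (RtoC 1 + Ci / RtoC alpha) / RtoC (1 + y))%C.

Definition Rop (alpha : R) (f : R -> C) (y : R) : C :=
  (Cderive (Cderive f) y + p0 y alpha * Cderive f y + q0 y alpha * f y
   + f y * RtoC (Cmod (f y) ^ 2) / RtoC ((1 - y) ^ 2))%C.

Definition wY (y : R) : R := (1 + y) * (1 - y) ^ 2.

Definition cont_on_closed (h : R -> C) : Prop :=
  forall y, -1 <= y <= 1 -> forall eps, 0 < eps -> exists delta, 0 < delta /\
    forall z, -1 <= z <= 1 -> Rabs (z - y) < delta -> Cmod (h z - h y)%C < eps.

Definition inY (f : R -> C) : Prop :=
  (forall y, -1 < y < 1 -> continuous f y) /\
  exists h : R -> C, cont_on_closed h /\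
    forall y, -1 < y < 1 -> h y = (RtoC (wY y) * f y)%C.

Definition Ydist_le (f g : R -> C) (e : R) : Prop :=
  forall y, -1 < y < 1 -> wY y * Cmod (f y - g y)%C <= e.

Definition cont_on_dom (astar : R) (F : R -> R -> C) : Prop :=
  forall y a, -1 <= y <= 1 -> a <> - astar ->
  forall eps, 0 < eps -> exists delta, 0 < delta /\
    forall y' a', -1 <= y' <= 1 -> a' <> - astar ->
      Rabs (y' - y) < delta -> Rabs (a' - a) < delta ->
      Cmod (F y' a' - F y a)%C < eps.

(* f is C^2 on [-1,1] x (R \ {-astar}) with the given partial derivatives:
   on the interior (-1,1) x (R \ {-astar}) the partial derivatives up to
   order 2 exist and equal fy, fa, fyy, fya (= d_a d_y f), fay (= d_y d_a f),
   faa, and all of these functions are continuous on the closed set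
   [-1,1] x (R \ {-astar}) (so their boundary values are the continuous
   extensions of the interior partial derivatives). *)
Definition C2_dom (astar : R) (f fy fa fyy fya fay faa : R -> R -> C) : Prop :=
  (forall y a, -1 < y < 1 -> a <> - astar ->
     is_derive (fun t => f t a) y (fy y a) /\
     is_derive (fun s => f y s) a (fa y a) /\
     is_derive (fun t => fy t a) y (fyy y a) /\
     is_derive (fun s => fy y s) a (fya y a) /\
     is_derive (fun t => fa t a) y (fay y a) /\
     is_derive (fun s => fa y s) a (faa y a)) /\
  cont_on_dom astar f /\ cont_on_dom astar fy /\ cont_on_dom astar fa /\
  cont_on_dom astar fyy /\ cont_on_dom astar fya /\ cont_on_dom astar fay /\
  cont_on_dom astar faa.

From Stdlib Require Import Reals Lra ClassicalEpsilon.
From Coquelicot Require Import Coquelicot.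
Open Scope R_scope.

(* Multiplying R(alpha, f) by the weight (1 + y)(1 - y)^2 of Y clears every singularity
   except (1 + y) G / (1 - y), where G = 4 i alpha f' - (2 - 2 i alpha) f.  The boundary
   condition says exactly that G vanishes at y = 1, so by the mean value theorem G / (1 - y)
   extends continuously by -dG/dy to y = 1, jointly in (y, a).  Hence the weighted operator
   is a jointly continuous function H on [-1, 1] x (R \ {-a_*}): each slice H(., a)
   witnesses membership in Y, and continuity in a, uniform in y by compactness of [-1, 1],
   is continuity in the norm of Y. *)

Lemma norm_C_R (z : C_R_NormedModule) : norm z = Cmod z.
Proof.
  destruct z as [x y]. unfold norm; simpl; unfold prod_norm, Cmod; simpl.
  change (norm x) with (Rabs x); change (norm y) with (Rabs y).
  rewrite !Rmult_1_r, <- !Rabs_mult, !Rabs_pos_eq by nra. reflexivity.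
Qed.

Lemma is_linear_Cmult_l (c : C) :
  is_linear (U := C_R_NormedModule) (V := C_R_NormedModule) (fun z => (c * z)%C).
Proof.
  destruct c as [c1 c2]. apply Build_is_linear.
  - intros [x1 x2] [y1 y2]. unfold plus; simpl; unfold prod_plus, plus; simpl.
    unfold Cmult; simpl. f_equal; ring.
  - intros k [x1 x2]. unfold scal; simpl; unfold prod_scal, scal; simpl; unfold mult; simpl.
    unfold Cmult; simpl. f_equal; ring.
  - exists (Cmod (c1, c2) + 1). split; [pose proof (Cmod_ge_0 (c1, c2)); lra|].
    intros x. rewrite !norm_C_R, Cmod_mult. pose proof (Cmod_ge_0 x). nra.
Qed.

Lemma is_derive_Cmult_l (F : R -> C) (c l : C) t :
  is_derive F t l -> is_derive (fun s => c * F s)%C t (c * l)%C.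
Proof.
  intros H. eapply filterdiff_ext_lin.
  - apply (filterdiff_comp F (fun z => (c * z)%C) _ (fun z => (c * z)%C) H).
    apply filterdiff_linear, is_linear_Cmult_l.
  - intros y. apply is_linear_Cmult_l.
Qed.

Lemma is_derive_Re (F : R -> C) t l : is_derive F t l -> is_derive (fun s => Re (F s)) t (Re l).
Proof.
  intros H. eapply filterdiff_ext_lin.
  - apply (filterdiff_comp F fst _ fst H), filterdiff_linear, is_linear_fst.
  - reflexivity.
Qed.

Lemma is_derive_Im (F : R -> C) t l : is_derive F t l -> is_derive (fun s => Im (F s)) t (Im l).
Proof.
  intros H. eapply filterdiff_ext_lin.
  - apply (filterdiff_comp F snd _ snd H), filterdiff_linear, is_linear_snd.
  - reflexivity.
Qed.

Lemma Cderive_correct (F : R -> C) y l : is_derive F y l -> Cderive F y = l.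
Proof.
  intros H. unfold Cderive.
  assert (ERe : Derive (fun t => Re (F t)) y = Re l) by apply is_derive_unique, is_derive_Re, H.
  assert (EIm : Derive (fun t => Im (F t)) y = Im l) by apply is_derive_unique, is_derive_Im, H.
  rewrite ERe, EIm. destruct l; reflexivity.
Qed.

Lemma Cderive2_correct (F F' : R -> C) y l :
  locally y (fun t => is_derive F t (F' t)) -> is_derive F' y l ->
  Cderive (Cderive F) y = l.
Proof.
  intros HF HF'. apply Cderive_correct. eapply is_derive_ext_loc; [|exact HF'].
  eapply filter_imp; [|exact HF]. intros t Ht. symmetry. now apply Cderive_correct.
Qed.

Lemma locally_open_interval a b y : a < y < b -> locally y (fun t => a < t < b).
Proof. intros Hy. apply (locally_interval _ _ a b); simpl; tauto. Qed.

Lemma RtoC_neq0 x : x <> 0 -> RtoC x <> RtoC 0.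
Proof. intros Hx E. apply Hx, RtoC_inj, E. Qed.

Lemma im_le_Cmod (z : C) : Rabs (Im z) <= Cmod z.
Proof.
  destruct z as [x y]. unfold Cmod; simpl. rewrite <- sqrt_Rsqr_abs.
  apply sqrt_le_1_alt. unfold Rsqr. nra.
Qed.

Lemma Cmod_le_Re_Im (z : C) : Cmod z <= Rabs (Re z) + Rabs (Im z).
Proof.
  destruct z as [x y]. unfold Cmod; simpl.
  pose proof (Rabs_pos x). pose proof (Rabs_pos y).
  rewrite <- (sqrt_Rsqr (Rabs x + Rabs y)) by lra.
  apply sqrt_le_1_alt. rewrite Rsqr_plus, <- !Rsqr_abs. unfold Rsqr. nra.
Qed.

Lemma continuous_C_intro (g : R -> C) y :
  (forall eps, 0 < eps -> exists d, 0 < d /\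
     forall t, Rabs (t - y) < d -> Cmod (g t - g y) < eps) ->
  continuous g y.
Proof.
  intros H. apply filterlim_locally. intros eps.
  destruct (H eps (cond_pos eps)) as [d [Hd Ht]]. exists (mkposreal d Hd).
  intros t Hb. specialize (Ht t Hb).
  pose proof (re_le_Cmod (g t - g y)%C). pose proof (im_le_Cmod (g t - g y)%C).
  destruct (g t) as [u1 u2], (g y) as [v1 v2]; simpl in *.
  split; unfold ball; simpl; unfold AbsRing_ball, abs, minus, plus, opp; simpl; lra.
Qed.

Lemma continuity_pt_ex_derive (p : R -> R) x : ex_derive p x -> continuity_pt p x.
Proof. intros H. apply continuity_pt_filterlim, (ex_derive_continuous p x H). Qed.

Definition clamp (a b s : R) : R := Rmax a (Rmin s b).

Lemma clamp_mem a b s : a <= b -> a <= clamp a b s <= b.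
Proof. intros. unfold clamp, Rmax, Rmin; repeat destruct Rle_dec; lra. Qed.

Lemma clamp_id a b s : a <= s <= b -> clamp a b s = s.
Proof. intros. unfold clamp, Rmax, Rmin; repeat destruct Rle_dec; lra. Qed.

Lemma clamp_lipschitz a b s t : a <= b -> Rabs (clamp a b s - clamp a b t) <= Rabs (s - t).
Proof.
  intros. unfold clamp, Rmax, Rmin; repeat destruct Rle_dec;
    unfold Rabs; repeat destruct Rcase_abs; lra.
Qed.

(* [MVT_gen] wants continuity on a neighbourhood of [a, b]; composing with the
   clamp onto [a, b] turns continuity within [a, b] into that. *)
Lemma MVT_within (phi dphi : R -> R) a b : a < b ->
  (forall t, a < t < b -> is_derive phi t (dphi t)) ->
  (forall t, a <= t <= b -> forall eps, 0 < eps -> exists d, 0 < d /\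
     forall s, a <= s <= b -> Rabs (s - t) < d -> Rabs (phi s - phi t) < eps) ->
  exists c, a <= c <= b /\ phi b - phi a = dphi c * (b - a).
Proof.
  intros Hab Hd Hc.
  destruct (MVT_gen (fun s => phi (clamp a b s)) a b dphi) as [c [Hc1 Hc2]];
    rewrite ?Rmin_left, ?Rmax_right in * by lra.
  - intros t Ht. eapply is_derive_ext_loc; [|apply Hd; exact Ht].
    eapply filter_imp; [|apply (locally_open_interval a b t Ht)].
    intros s Hs. simpl in Hs. rewrite clamp_id by lra. reflexivity.
  - intros t Ht. apply continuity_pt_locally. intros eps.
    destruct (Hc t Ht eps (cond_pos eps)) as [d [Hd0 Hd1]]. exists (mkposreal d Hd0).
    intros s Hs.
    assert (Hs' : Rabs (clamp a b s - clamp a b t) < d).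
    { eapply Rle_lt_trans; [apply clamp_lipschitz; lra|exact Hs]. }
    change (Rabs (phi (clamp a b s) - phi (clamp a b t)) < eps).
    rewrite (clamp_id a b t Ht) in *. apply Hd1; [apply clamp_mem; lra|exact Hs'].
  - exists c. split; [exact Hc1|]. rewrite !clamp_id in Hc2 by lra. exact Hc2.
Qed.

Lemma Cmean_value_bound (g dg : R -> C) (L : C) a b eps : a < b ->
  (forall t, a < t < b -> is_derive g t (dg t)) ->
  (forall t, a <= t <= b -> forall e, 0 < e -> exists d, 0 < d /\
     forall s, a <= s <= b -> Rabs (s - t) < d -> Cmod (g s - g t) < e) ->
  (forall c, a <= c <= b -> Cmod (dg c - L) <= eps) ->
  Cmod (g b - g a - L * RtoC (b - a)) <= 2 * eps * (b - a).
Proof.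
  intros Hab Hd Hc HL.
  destruct (MVT_within (fun t => Re (g t)) (fun t => Re (dg t)) a b Hab) as [c1 [Hc1 E1]].
  { intros t Ht. apply is_derive_Re, Hd, Ht. }
  { intros t Ht e He. destruct (Hc t Ht e He) as [d [Hd0 Hd1]]. exists d. split; [exact Hd0|].
    intros s Hs Hst. eapply Rle_lt_trans; [|apply (Hd1 s Hs Hst)].
    apply (re_le_Cmod (g s - g t)%C). }
  destruct (MVT_within (fun t => Im (g t)) (fun t => Im (dg t)) a b Hab) as [c2 [Hc2 E2]].
  { intros t Ht. apply is_derive_Im, Hd, Ht. }
  { intros t Ht e He. destruct (Hc t Ht e He) as [d [Hd0 Hd1]]. exists d. split; [exact Hd0|].
    intros s Hs Hst. eapply Rle_lt_trans; [|apply (Hd1 s Hs Hst)].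
    apply (im_le_Cmod (g s - g t)%C). }
  assert (ERe : Re (g b - g a - L * RtoC (b - a)) = Re (dg c1 - L) * (b - a)).
  { change (Re (g b) - Re (g a) - Re (L * RtoC (b - a)) = (Re (dg c1) - Re L) * (b - a)).
    rewrite re_scal_r. lra. }
  assert (EIm : Im (g b - g a - L * RtoC (b - a)) = Im (dg c2 - L) * (b - a)).
  { change (Im (g b) - Im (g a) - Im (L * RtoC (b - a)) = (Im (dg c2) - Im L) * (b - a)).
    rewrite im_scal_r. lra. }
  eapply Rle_trans; [apply Cmod_le_Re_Im|].
  rewrite ERe, EIm, !Rabs_mult, (Rabs_pos_eq (b - a)) by lra.
  pose proof (Rle_trans _ _ _ (re_le_Cmod _) (HL c1 Hc1)).
  pose proof (Rle_trans _ _ _ (im_le_Cmod _) (HL c2 Hc2)).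
  nra.
Qed.

Definition cont_within (D : R -> R -> Prop) (F : R -> R -> C) (y a : R) : Prop :=
  forall eps, 0 < eps -> exists delta, 0 < delta /\
    forall y' a', D y' a' -> Rabs (y' - y) < delta -> Rabs (a' - a) < delta ->
      Cmod (F y' a' - F y a) < eps.

Definition Cop_continuous (op : C -> C -> C) : Prop :=
  forall u v eps, 0 < eps -> exists d, 0 < d /\
    forall u' v', Cmod (u' - u) < d -> Cmod (v' - v) < d -> Cmod (op u' v' - op u v) < eps.

Section ContWithin.

Variable D : R -> R -> Prop.

Lemma cont_within_op op F G y a : Cop_continuous op ->
  cont_within D F y a -> cont_within D G y a ->
  cont_within D (fun y a => op (F y a) (G y a)) y a.
Proof.
  intros Hop HF HG eps He.
  destruct (Hop (F y a) (G y a) eps He) as [d [Hd Hd']].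
  destruct (HF d Hd) as [d1 [Hd1 H1]]. destruct (HG d Hd) as [d2 [Hd2 H2]].
  exists (Rmin d1 d2). split; [apply Rmin_pos; assumption|].
  pose proof (Rmin_l d1 d2). pose proof (Rmin_r d1 d2).
  intros y' a' HD Hy Ha. apply Hd'; [apply H1 | apply H2]; auto; lra.
Qed.

Lemma Cplus_continuous : Cop_continuous Cplus.
Proof.
  intros u v eps He. exists (eps / 2). split; [lra|]. intros u' v' H1 H2.
  replace (u' + v' - (u + v))%C with ((u' - u) + (v' - v))%C by ring.
  eapply Rle_lt_trans; [apply Cmod_triangle|lra].
Qed.

Lemma Cminus_continuous : Cop_continuous Cminus.
Proof.
  intros u v eps He. exists (eps / 2). split; [lra|]. intros u' v' H1 H2.
  replace (u' - v' - (u - v))%C with ((u' - u) + - (v' - v))%C by ring.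
  eapply Rle_lt_trans; [apply Cmod_triangle|]. rewrite Cmod_opp. lra.
Qed.

Lemma Cmult_continuous : Cop_continuous Cmult.
Proof.
  intros u v eps He.
  set (M := 1 + Cmod u + Cmod v).
  pose proof (Cmod_ge_0 u). pose proof (Cmod_ge_0 v).
  assert (HM : 0 < M) by (unfold M; lra).
  exists (Rmin 1 (eps / M)). split; [apply Rmin_pos; [lra|apply Rdiv_lt_0_compat; assumption]|].
  intros u' v' H1 H2.
  replace (u' * v' - u * v)%C with ((u' - u) * (v' - v) + u * (v' - v) + (u' - u) * v)%C by ring.
  assert (HdM : Rmin 1 (eps / M) * M <= eps).
  { apply Rle_trans with (eps / M * M); [apply Rmult_le_compat_r, Rmin_r; lra|].
    right. field. lra. }
  pose proof (Rmin_l 1 (eps / M)).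
  pose proof (Cmod_ge_0 (u' - u)). pose proof (Cmod_ge_0 (v' - v)).
  eapply Rle_lt_trans; [apply Cmod_triangle|].
  eapply Rle_lt_trans; [apply Rplus_le_compat_r, Cmod_triangle|].
  rewrite !Cmod_mult.
  set (d := Rmin 1 (eps / M)) in *. unfold M in HdM. set (p := Cmod (u' - u)) in *. set (q := Cmod (v' - v)) in *.
  assert (p * q <= p * 1) by (apply Rmult_le_compat_l; lra).
  assert (Cmod u * q <= Cmod u * d) by (apply Rmult_le_compat_l; lra).
  assert (p * Cmod v <= d * Cmod v) by (apply Rmult_le_compat_r; lra).
  nra.
Qed.

Lemma cont_within_plus F G y a : cont_within D F y a -> cont_within D G y a ->
  cont_within D (fun y a => F y a + G y a)%C y a.
Proof. apply cont_within_op, Cplus_continuous. Qed.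

Lemma cont_within_minus F G y a : cont_within D F y a -> cont_within D G y a ->
  cont_within D (fun y a => F y a - G y a)%C y a.
Proof. apply cont_within_op, Cminus_continuous. Qed.

Lemma cont_within_mult F G y a : cont_within D F y a -> cont_within D G y a ->
  cont_within D (fun y a => F y a * G y a)%C y a.
Proof. apply cont_within_op, Cmult_continuous. Qed.

Lemma cont_within_const (c : C) y a : cont_within D (fun _ _ => c) y a.
Proof.
  intros eps He. exists 1. split; [lra|]. intros.
  replace (c - c)%C with (RtoC 0) by ring. rewrite Cmod_0. exact He.
Qed.

Lemma cont_within_Rfun_y (p : R -> R) y a : continuity_pt p y ->
  cont_within D (fun y _ => RtoC (p y)) y a.
Proof.
  intros H eps He. apply continuity_pt_locally with (eps := mkposreal eps He) in H.
  destruct H as [d Hd]. exists d. split; [apply cond_pos|].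
  intros y' a' _ Hy _. rewrite <- RtoC_minus, Cmod_R. apply (Hd y' Hy).
Qed.

Lemma cont_within_Rfun_a (p : R -> R) y a : continuity_pt p a ->
  cont_within D (fun _ a => RtoC (p a)) y a.
Proof.
  intros H eps He. apply continuity_pt_locally with (eps := mkposreal eps He) in H.
  destruct H as [d Hd]. exists d. split; [apply cond_pos|].
  intros y' a' _ _ Ha. rewrite <- RtoC_minus, Cmod_R. apply (Hd a' Ha).
Qed.

Lemma cont_within_Cmod F y a : cont_within D F y a ->
  cont_within D (fun y a => RtoC (Cmod (F y a))) y a.
Proof.
  intros H eps He. destruct (H eps He) as [d [Hd H']]. exists d. split; [exact Hd|].
  intros y' a' HD Hy Ha. rewrite <- RtoC_minus, Cmod_R.
  specialize (H' y' a' HD Hy Ha).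
  pose proof (Cmod_triangle (F y' a' - F y a) (F y a)) as T1.
  pose proof (Cmod_triangle (- (F y' a' - F y a)) (F y' a')) as T2.
  replace (F y' a' - F y a + F y a)%C with (F y' a') in T1 by ring.
  replace (- (F y' a' - F y a) + F y' a')%C with (F y a) in T2 by ring.
  rewrite Cmod_opp in T2. apply Rabs_def1; lra.
Qed.

Lemma cont_within_ext_loc F G y a :
  (exists r, 0 < r /\ forall y' a', D y' a' ->
     Rabs (y' - y) < r -> Rabs (a' - a) < r -> F y' a' = G y' a') ->
  F y a = G y a -> cont_within D G y a -> cont_within D F y a.
Proof.
  intros [r [Hr E]] E0 H eps He. destruct (H eps He) as [d [Hd H']].
  exists (Rmin d r). split; [apply Rmin_pos; assumption|].
  pose proof (Rmin_l d r). pose proof (Rmin_r d r).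
  intros y' a' HD Hy Ha. rewrite E0, E by (auto; lra). apply H'; auto; lra.
Qed.

End ContWithin.

Definition strip (A : R -> Prop) (y a : R) : Prop := -1 <= y <= 1 /\ A a.

Lemma cont_within_strip_continuous A F y a : -1 < y < 1 -> A a ->
  cont_within (strip A) F y a -> continuous (fun t => F t a) y.
Proof.
  intros Hy Ha H. apply continuous_C_intro. intros eps He.
  destruct (H eps He) as [d [Hd H']].
  exists (Rmin d (Rmin (1 + y) (1 - y))). split; [repeat apply Rmin_pos; lra|].
  pose proof (Rmin_l d (Rmin (1 + y) (1 - y))). pose proof (Rmin_r d (Rmin (1 + y) (1 - y))).
  pose proof (Rmin_l (1 + y) (1 - y)). pose proof (Rmin_r (1 + y) (1 - y)).
  intros t Ht. apply Rabs_def2 in Ht as Ht'.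
  apply H'; [split; [lra|exact Ha] | apply Rabs_def1; lra |].
  rewrite Rminus_eq_0, Rabs_R0. exact Hd.
Qed.

(* Tube lemma, via a Lebesgue number of the cover of [-1, 1] by the continuity radii. *)
Lemma cont_within_strip_uniform A F a0 : A a0 ->
  (forall t, -1 <= t <= 1 -> cont_within (strip A) F t a0) ->
  forall eps, 0 < eps -> exists delta, 0 < delta /\
    forall y a, strip A y a -> Rabs (a - a0) < delta -> Cmod (F y a - F y a0) < eps.
Proof.
  intros Ha0 HF eps He.
  assert (Hex : forall t, exists d : posreal, -1 <= t <= 1 -> forall y a, strip A y a ->
      Rabs (y - t) < d -> Rabs (a - a0) < d -> Cmod (F y a - F t a0) < eps / 2).
  { intros t. destruct (Rle_dec (-1) t) as [Ht1|Ht1]; [destruct (Rle_dec t 1) as [Ht2|Ht2]|].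
    - destruct (HF t (conj Ht1 Ht2) (eps / 2) ltac:(lra)) as [d [Hd H]].
      exists (mkposreal d Hd). intros _. exact H.
    - exists (mkposreal 1 Rlt_0_1). lra.
    - exists (mkposreal 1 Rlt_0_1). lra. }
  pose (delta t := proj1_sig (constructive_indefinite_description _ (Hex t))).
  assert (Hdelta : forall t, -1 <= t <= 1 -> forall y a, strip A y a ->
      Rabs (y - t) < delta t -> Rabs (a - a0) < delta t -> Cmod (F y a - F t a0) < eps / 2)
    by (intros t; exact (proj2_sig (constructive_indefinite_description _ (Hex t)))).
  destruct (compactness_value_1d (-1) 1 delta) as [d Hd].
  exists d. split; [apply cond_pos|]. intros y a [Hy Ha] Had.
  destruct (Rlt_le_dec (Cmod (F y a - F y a0)) eps) as [ok|nok]; [exact ok|]. exfalso.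
  apply (Hd y Hy). intros [t [Ht [Hyt Hdt]]].
  pose proof (Hdelta t Ht y a (conj Hy Ha) Hyt (Rlt_le_trans _ _ _ Had Hdt)) as B1.
  pose proof (Hdelta t Ht y a0 (conj Hy Ha0) Hyt) as B2.
  rewrite Rminus_eq_0, Rabs_R0 in B2. specialize (B2 (cond_pos _)).
  replace (F y a - F y a0)%C with ((F y a - F t a0) + - (F y a0 - F t a0))%C in nok by ring.
  pose proof (Cmod_triangle (F y a - F t a0) (- (F y a0 - F t a0))). rewrite Cmod_opp in *. lra.
Qed.

(* At [y = 1] the value is the limit of [G / (1 - y)] when [G 1 a = 0]. *)
Definition div_1my (G Gy : R -> R -> C) (y a : R) : C :=
  if Rlt_dec y 1 then (G y a / RtoC (1 - y))%C else (- Gy y a)%C.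

Section DivideByVanishing.

Variable A : R -> Prop.
Variables G Gy : R -> R -> C.

Hypothesis G_deriv : forall y a, -1 < y < 1 -> A a -> is_derive (fun t => G t a) y (Gy y a).
Hypothesis G_cont : forall y a, strip A y a -> cont_within (strip A) G y a.
Hypothesis Gy_cont : forall y a, strip A y a -> cont_within (strip A) Gy y a.
Hypothesis G_at_1 : forall a, A a -> G 1 a = 0.

Lemma div_1my_close y a (L : C) eps : -1 <= y < 1 -> A a ->
  (forall c, y <= c <= 1 -> Cmod (Gy c a - L) <= eps) ->
  Cmod (G y a / RtoC (1 - y) + L) <= 2 * eps.
Proof.
  intros Hy Ha HL.
  assert (Hmv : Cmod (G 1 a - G y a - L * RtoC (1 - y)) <= 2 * eps * (1 - y)).
  { apply (Cmean_value_bound (fun t => G t a) (fun t => Gy t a)); [lra | | | exact HL].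
    - intros t Ht. apply G_deriv; [lra | exact Ha].
    - intros t Ht e He. assert (Hta : strip A t a) by (split; [lra | exact Ha]).
      destruct (G_cont t a Hta e He) as [d [Hd H]].
      exists d. split; [exact Hd|]. intros s Hs Hst. apply H; [split; [lra|exact Ha] | exact Hst |].
      rewrite Rminus_eq_0, Rabs_R0. exact Hd. }
  rewrite G_at_1 in Hmv by exact Ha.
  replace (0 - G y a - L * RtoC (1 - y))%C with (- ((G y a / RtoC (1 - y) + L) * RtoC (1 - y)))%C in Hmv.
  2: { field. intros E. apply RtoC_inj in E. lra. }
  rewrite Cmod_opp, Cmod_mult, Cmod_R, Rabs_pos_eq in Hmv by lra.
  apply Rmult_le_reg_r with (1 - y); lra.
Qed.

Lemma cont_within_div_1my y a : strip A y a -> cont_within (strip A) (div_1my G Gy) y a.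
Proof.
  intros [Hy Ha]. destruct (Rlt_dec y 1) as [Hy1|Hy1].
  - apply cont_within_ext_loc with (G := fun y a => (G y a * RtoC (/ (1 - y)))%C).
    + exists (1 - y). split; [lra|]. intros y' a' _ Hy' _. apply Rabs_def2 in Hy'.
      unfold div_1my. destruct (Rlt_dec y' 1); [|lra]. rewrite RtoC_inv by lra. reflexivity.
    + unfold div_1my. destruct (Rlt_dec y 1); [|lra]. rewrite RtoC_inv by lra. reflexivity.
    + apply cont_within_mult; [apply G_cont; split; assumption|].
      apply cont_within_Rfun_y, continuity_pt_ex_derive.
      auto_derive. lra.
  - assert (y = 1) by lra. subst y.
    intros eps He. destruct (Gy_cont 1 a (conj Hy Ha) (eps / 4) ltac:(lra)) as [d [Hd H]].
    exists d. split; [exact Hd|]. intros y' a' [Hy' Ha'] Hyd Had.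
    unfold div_1my. destruct (Rlt_dec 1 1) as [|_]; [lra|].
    destruct (Rlt_dec y' 1) as [Hy'1|Hy'1].
    + replace (G y' a' / RtoC (1 - y') - - Gy 1 a)%C with (G y' a' / RtoC (1 - y') + Gy 1 a)%C by ring.
      apply Rle_lt_trans with (2 * (eps / 4)); [|lra].
      apply div_1my_close; [lra | exact Ha' |].
      intros c Hc. left. apply H; [split; [lra|exact Ha'] | | exact Had].
      apply Rabs_def2 in Hyd. apply Rabs_def1; lra.
    + assert (y' = 1) by lra. subst y'.
      replace (- Gy 1 a' - - Gy 1 a)%C with (- (Gy 1 a' - Gy 1 a))%C by ring.
      rewrite Cmod_opp. apply Rlt_trans with (eps / 4); [|lra].
      apply H; [split; assumption | exact Hyd | exact Had].
Qed.

End DivideByVanishing.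

Lemma wY_pos y : -1 < y < 1 -> 0 < wY y.
Proof. intros Hy. unfold wY. apply Rmult_lt_0_compat; [lra | apply pow_lt; lra]. Qed.

Lemma cont_on_dom_within astar F : cont_on_dom astar F ->
  forall y a, strip (fun a => a <> - astar) y a -> cont_within (strip (fun a => a <> - astar)) F y a.
Proof.
  intros HF y a [Hy Ha] eps He. destruct (HF y a Hy Ha eps He) as [d [Hd H]].
  exists d. split; [exact Hd|]. intros y' a' [Hy' Ha']. apply H; assumption.
Qed.

Section Operator.

Variable astar : R.
Variables f fy fyy : R -> R -> C.

Local Notation Adm := (fun a => a <> - astar).
Local Notation Dom := (strip Adm).

Hypothesis f_deriv : forall y a, -1 < y < 1 -> a <> - astar -> is_derive (fun t => f t a) y (fy y a).
Hypothesis fy_deriv : forall y a, -1 < y < 1 -> a <> - astar -> is_derive (fun t => fy t a) y (fyy y a).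
Hypothesis f_cont : forall y a, Dom y a -> cont_within Dom f y a.
Hypothesis fy_cont : forall y a, Dom y a -> cont_within Dom fy y a.
Hypothesis fyy_cont : forall y a, Dom y a -> cont_within Dom fyy y a.
Hypothesis boundary_condition : forall a, a <> - astar ->
  fy 1 a = ((RtoC 1 - Ci * RtoC (astar + a)) / (RtoC 2 * Ci * RtoC (astar + a)) * f 1 a)%C.

Definition alpha (a : R) : C := RtoC (astar + a).

(* Multiplied by [wY], the two [(1 - y)^-3] terms of [p0] and [q0] leave [(1 + y) bc_defect / (1 - y)]. *)
Definition bc_defect (y a : R) : C :=
  (RtoC 4 * Ci * alpha a * fy y a - (RtoC 2 - RtoC 2 * Ci * alpha a) * f y a)%C.

Definition bc_defect_y (y a : R) : C :=
  (RtoC 4 * Ci * alpha a * fyy y a - (RtoC 2 - RtoC 2 * Ci * alpha a) * fy y a)%C.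

Definition Rop_weighted (y a : R) : C :=
  (RtoC (wY y) * fyy y a
   + RtoC (1 + y) * div_1my bc_defect bc_defect_y y a
   + (RtoC (2 * (1 - y) ^ 2) - RtoC (1 + y) * (RtoC 2 * Ci * alpha a)
      - RtoC ((1 + y) * (1 - y)) * (RtoC 2 + RtoC 2 * Ci * / alpha a)) * fy y a
   - (RtoC (1 + y) * (/ alpha a * / alpha a - Ci * / alpha a)
      + RtoC (2 * (1 - y)) * (RtoC 1 + Ci * / alpha a)) * f y a
   + RtoC (1 + y) * f y a * (RtoC (Cmod (f y a)) * RtoC (Cmod (f y a))))%C.

Lemma bc_defect_at_1 a : a <> - astar -> bc_defect 1 a = RtoC 0.
Proof.
  intros Ha. unfold bc_defect. rewrite boundary_condition by exact Ha. unfold alpha.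
  pose proof (RtoC_neq0 (astar + a) ltac:(lra)). pose proof (RtoC_neq0 2 ltac:(lra)).
  replace (RtoC 4) with (RtoC 2 * RtoC 2)%C by (rewrite <- RtoC_mult; f_equal; lra).
  pose proof Ci_nz. field. auto.
Qed.

Lemma wY_mul_Rop y a : -1 < y < 1 -> a <> - astar ->
  (RtoC (wY y) * Rop (astar + a) (fun t => f t a) y)%C = Rop_weighted y a.
Proof.
  intros Hy Ha. unfold Rop.
  rewrite (Cderive2_correct _ (fun t => fy t a) y (fyy y a)).
  2: { eapply filter_imp; [|apply (locally_open_interval (-1) 1 y Hy)].
       intros t Ht. apply f_deriv; assumption. }
  2: apply fy_deriv; assumption.
  rewrite (Cderive_correct _ y (fy y a)) by (apply f_deriv; assumption).
  unfold Rop_weighted, div_1my. destruct (Rlt_dec y 1) as [_|]; [|lra].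
  unfold bc_defect, alpha, p0, q0, wY. rewrite !RtoC_mult, !RtoC_pow.
  pose proof (RtoC_neq0 (1 - y) ltac:(lra)). pose proof (RtoC_neq0 (1 + y) ltac:(lra)).
  pose proof (RtoC_neq0 (astar + a) ltac:(lra)).
  rewrite !RtoC_plus, !RtoC_minus in *. field. auto.
Qed.

Lemma cont_within_alpha y a : cont_within Dom (fun _ a => alpha a) y a.
Proof. apply cont_within_Rfun_a, continuity_pt_ex_derive. auto_derive. exact I. Qed.

Lemma cont_within_inv_alpha y a : a <> - astar -> cont_within Dom (fun _ a => / alpha a)%C y a.
Proof.
  intros Ha. apply cont_within_ext_loc with (G := fun _ a => RtoC (/ (astar + a))).
  - exists 1. split; [lra|]. intros y' a' [_ Ha'] _ _. unfold alpha. rewrite RtoC_inv by lra. reflexivity.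
  - unfold alpha. rewrite RtoC_inv by lra. reflexivity.
  - apply cont_within_Rfun_a, continuity_pt_ex_derive. auto_derive. lra.
Qed.

Ltac cont_within_tac :=
  repeat first
   [ apply cont_within_minus | apply cont_within_plus | apply cont_within_mult
   | apply cont_within_Cmod | apply cont_within_const | assumption | apply cont_within_alpha
   | apply cont_within_inv_alpha; assumption
   | apply f_cont; assumption | apply fy_cont; assumption | apply fyy_cont; assumption
   | apply cont_within_Rfun_y, continuity_pt_ex_derive; auto_derive; exact I ].

Lemma cont_within_Rop_weighted y a : Dom y a -> cont_within Dom Rop_weighted y a.
Proof.
  intros Hya. pose proof Hya as [Hy Ha]. unfold Rop_weighted.
  assert (Hdiv : cont_within Dom (div_1my bc_defect bc_defect_y) y a).
  { apply (cont_within_div_1my Adm); [| | | exact bc_defect_at_1 | exact Hya].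
    - intros t b Ht Hb. unfold bc_defect, bc_defect_y.
      apply (is_derive_minus (fun s => RtoC 4 * Ci * alpha b * fy s b)%C
                             (fun s => (RtoC 2 - RtoC 2 * Ci * alpha b) * f s b)%C);
        apply is_derive_Cmult_l; auto.
    - intros y' b Hyb. pose proof Hyb as [_ Hb]. unfold bc_defect. cont_within_tac.
    - intros y' b Hyb. pose proof Hyb as [_ Hb]. unfold bc_defect_y. cont_within_tac. }
  unfold wY. cont_within_tac.
Qed.

Lemma Rop_eq_weighted_div_wY y a : -1 < y < 1 -> a <> - astar ->
  Rop (astar + a) (fun t => f t a) y = (Rop_weighted y a * RtoC (/ wY y))%C.
Proof.
  intros Hy Ha. rewrite <- wY_mul_Rop by assumption. pose proof (wY_pos y Hy).
  rewrite RtoC_inv by lra. field. apply RtoC_neq0. lra.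
Qed.

Lemma Rop_inY a : a <> - astar -> inY (Rop (astar + a) (fun t => f t a)).
Proof.
  intros Ha. split.
  - intros y Hy.
    apply continuous_ext_loc with (fun t => Rop_weighted t a * RtoC (/ wY t))%C.
    { eapply filter_imp; [|apply (locally_open_interval (-1) 1 y Hy)].
      intros t Ht. symmetry. apply Rop_eq_weighted_div_wY; assumption. }
    apply (cont_within_strip_continuous Adm (fun y a => Rop_weighted y a * RtoC (/ wY y))%C y a Hy Ha).
    apply cont_within_mult; [apply cont_within_Rop_weighted; split; [lra | exact Ha]|].
    apply cont_within_Rfun_y, continuity_pt_ex_derive. unfold wY. auto_derive.
    pose proof (wY_pos y Hy). unfold wY in *. simpl in *. lra.
  - exists (fun y => Rop_weighted y a). split.
    + intros y Hy eps He. destruct (cont_within_Rop_weighted y a (conj Hy Ha) eps He) as [d [Hd Hc]].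
      exists d. split; [exact Hd|]. intros z Hz Hzy.
      apply Hc; [split; assumption | exact Hzy |]. rewrite Rminus_eq_0, Rabs_R0. exact Hd.
    + intros y Hy. symmetry. apply wY_mul_Rop; assumption.
Qed.

Lemma Rop_Ydist_continuous a0 : a0 <> - astar -> forall eps, 0 < eps ->
  exists delta, 0 < delta /\ forall a, a <> - astar -> Rabs (a - a0) < delta ->
    Ydist_le (Rop (astar + a) (fun y => f y a)) (Rop (astar + a0) (fun y => f y a0)) eps.
Proof.
  intros Ha0 eps He.
  destruct (cont_within_strip_uniform Adm Rop_weighted a0 Ha0
              (fun t Ht => cont_within_Rop_weighted t a0 (conj Ht Ha0)) eps He) as [d [Hd Hunif]].
  exists d. split; [exact Hd|]. intros a Ha Had y Hy.
  pose proof (wY_pos y Hy).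
  rewrite <- (Rabs_pos_eq (wY y)), <- Cmod_R, <- Cmod_mult by lra.
  replace (RtoC (wY y) * (Rop (astar + a) (fun y => f y a) y - Rop (astar + a0) (fun y => f y a0) y))%C
    with (RtoC (wY y) * Rop (astar + a) (fun y => f y a) y
          - RtoC (wY y) * Rop (astar + a0) (fun y => f y a0) y)%C by ring.
  rewrite !wY_mul_Rop by assumption. left. apply Hunif; [split; [lra | exact Ha] | exact Had].
Qed.

End Operator.

Theorem lemma3p5 (astar : R) (f fy fa fyy fya fay faa : R -> R -> C) :
  astar <> 0 ->
  C2_dom astar f fy fa fyy fya fay faa ->
  (forall a, a <> - astar ->
     fy 1 a = ((RtoC 1 - Ci * RtoC (astar + a)) / (RtoC 2 * Ci * RtoC (astar + a))
               * f 1 a)%C) ->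
  (forall a, a <> - astar -> inY (Rop (astar + a) (fun y => f y a))) /\
  (forall a0, a0 <> - astar -> forall eps, 0 < eps -> exists delta, 0 < delta /\
     forall a, a <> - astar -> Rabs (a - a0) < delta ->
       Ydist_le (Rop (astar + a) (fun y => f y a)) (Rop (astar + a0) (fun y => f y a0)) eps).
Proof.
  intros _ [Hder [Hf [Hfy [_ [Hfyy _]]]]] Hbc.
  assert (f_deriv : forall y a, -1 < y < 1 -> a <> - astar -> is_derive (fun t => f t a) y (fy y a))
    by (intros y a Hy Ha; apply (Hder y a Hy Ha)).
  assert (fy_deriv : forall y a, -1 < y < 1 -> a <> - astar -> is_derive (fun t => fy t a) y (fyy y a))
    by (intros y a Hy Ha; apply (Hder y a Hy Ha)).
  pose proof (cont_on_dom_within astar f Hf) as f_cont.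
  pose proof (cont_on_dom_within astar fy Hfy) as fy_cont.
  pose proof (cont_on_dom_within astar fyy Hfyy) as fyy_cont.
  split; [apply (Rop_inY astar f fy fyy) | apply (Rop_Ydist_continuous astar f fy fyy)]; assumption.
Qed.
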